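(* Let $\lambda\in\mathbb R$. Each column sum of the matrix representing $(L^*+\lambda)^2$ with respect to the ordered basis $u^*_0,u^*_1,\dots,u^*_d$ of $\mathcal P_d(\mathbb R)$ equals $\lambda^2$.
   Context: Fix an integer $d\ge0$ and $r,s\in(-1,\infty)$. Write $(x)_i=x(x+1)\cdots(x+i-1)$, $(x)_0=1$. For $0\le i\le d$ put $\theta_i=(d-i)(d-i+r+s+1)$ (distinct) and $\theta^*_i=i$. Put $b^*_i=\frac{(d-i)(i-d-s)(2d-2i+r+s+2)_i}{(2d-2i+r+s)_{i+1}}$ ($0\le i\le d-1$), $c^*_i=\frac{i(i-d-r-1)(d-i+r+s+1)_{d-i}}{(d-i+r+s+2)_{d-i+1}}$ ($1\le i\le d$), $b^*_d=c^*_0=0$, $a^*_i=\theta^*_0-b^*_i-c^*_i$, $k^*_i=\frac{b^*_0\cdots b^*_{i-1}}{c^*_1\cdots c^*_i}$ ($0\le i\le d$). Put $c_i=i(i+r)$ and $\nu=\frac{\prod_{j=1}^d(\theta_0-\theta_j)}{c_1\cdots c_d}$. Let $\mathcal P_d(\mathbb R)$ be the real polynomials of degree at most $d$, each determined by its values at $\theta_0,\dots,\theta_d$. Let $L^*$ be the linear map on $\mathcal P_d(\mathbb R)$ with $(L^*f)(\theta_i)=b^*_i f(\theta_{i+1})+a^*_i f(\theta_i)+c^*_i f(\theta_{i-1})$ ($0\le i\le d$; terms with coefficient $b^*_d$ or $c^*_0$ omitted). Let $u^*_i\in\mathcal P_d(\mathbb R)$ be defined by $u^*_i(\theta_j)=0$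 for $j\neq i$ and $u^*_i(\theta_i)=\nu/k^*_i$; these form a basis. $\lambda$ denotes $\lambda$ times the identity map. *)

From HB Require Import structures.
From mathcomp Require Import all_boot all_order all_algebra.
From mathcomp Require Import reals.
Set Implicit Arguments. Unset Strict Implicit. Unset Printing Implicit Defensive.
Import Order.TTheory GRing.Theory Num.Theory.
Local Open Scope ring_scope.

Section DualHahn.
Variables (R : realType) (d : nat) (r s : R).

Definition poch (x : R) (i : nat) : R := \prod_(k < i) (x + k%:R).

(* theta_i = (d-i)(d-i+r+s+1) ; only used for i <= d (except multiplied by 0) *)
Definition theta (i : nat) : R := (d - i)%:R * ((d - i)%:R + r + s + 1).
Definition thetas (i : nat) : R := i%:R.

Definition bs (i : nat) : R :=
  if (i < d)%N then
    (d - i)%:R * (i%:R - d%:R - s) * poch (2 * (d - i)%:R + r + s + 2) i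
      / poch (2 * (d - i)%:R + r + s) i.+1
  else 0.

Definition cs (i : nat) : R :=
  if (0 < i)%N then
    i%:R * (i%:R - d%:R - r - 1) * poch ((d - i)%:R + r + s + 1) (d - i)
      / poch ((d - i)%:R + r + s + 2) (d - i).+1
  else 0.

Definition as_ (i : nat) : R := thetas 0 - bs i - cs i.

Definition ks (i : nat) : R :=
  (\prod_(k < i) bs k) / (\prod_(k < i) cs k.+1).

Definition cc (i : nat) : R := i%:R * (i%:R + r).

Definition nu : R :=
  (\prod_(1 <= j < d.+1) (theta 0 - theta j)) / (\prod_(1 <= j < d.+1) cc j).

(* right-hand side of (L* f)(theta_i); terms with b*_d, c*_0 vanish since
   those coefficients are 0 *)
Definition Lstar_val (f : {poly R}) (i : nat) : R :=
  bs i * f.[theta i.+1] + as_ i * f.[theta i] + cs i * f.[theta i.-1].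

End DualHahn.

(** The functional [f |-> \sum_k k*_k f(theta_k)] kills [L*]: the weights satisfy
    detailed balance [k*_k b*_k = k*_(k+1) c*_(k+1)], and [a*_k = -b*_k - c*_k]
    since [theta*_0 = 0], so the sum telescopes.  It therefore maps [(L* + lam)^2 f]
    to [lam^2] times its value at [f], and it takes the value [nu] on every [u*_i].
    Applying it to [(L* + lam)^2 u*_j = \sum_i M_ij u*_i] gives
    [lam^2 nu = nu \sum_i M_ij], and [nu <> 0]. *)
From HB Require Import structures.
From mathcomp Require Import all_boot all_order all_algebra.
From mathcomp Require Import reals ring lra.
Set Implicit Arguments. Unset Strict Implicit. Unset Printing Implicit Defensive.
Import Order.TTheory GRing.Theory Num.Theory.
Local Open Scope ring_scope.

Lemma sum_birth_death_eq0 (R : comPzRingType) (n : nat) (w b c F : nat -> R) :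
  (forall k, (k < n)%N -> w k * b k = w k.+1 * c k.+1) -> b n = 0 -> c 0 = 0 ->
  \sum_(k < n.+1) w k * (b k * (F k.+1 - F k) + c k * (F k.-1 - F k)) = 0.
Proof.
move=> balance bn0 c00.
pose flow k := w k * b k * (F k.+1 - F k).
pose G k := if k is k'.+1 then flow k' else 0.
have termE k : (k < n.+1)%N ->
    w k * (b k * (F k.+1 - F k) + c k * (F k.-1 - F k)) = G k.+1 - G k.
  case: k => [_|k]; first by rewrite /G /flow c00; ring.
  by rewrite ltnS => /balance wbc; rewrite /G /flow wbc /=; ring.
rewrite (eq_bigr (fun k : 'I_n.+1 => G k.+1 - G k)) => [|k _]; last exact: termE.
by rewrite -(big_mkord xpredT (fun k => G k.+1 - G k)) telescope_sumr //= /flow bn0; ring.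
Qed.

Section DualHahnWeights.
Variables (R : realType) (d : nat) (r s : R).
Hypotheses (hr : -1 < r) (hs : -1 < s).

Lemma poch_gt0 (x : R) n : (forall k, (k < n)%N -> 0 < x + k%:R) -> 0 < poch x n.
Proof. by move=> pos; apply: prodr_gt0 => k _; apply: pos. Qed.

Lemma bs_lt0 i : (i < d)%N -> bs d r s i < 0.
Proof.
move: (hr) (hs) => r_gt s_gt lt_id; rewrite /bs lt_id.
have dmi_ge1 : 1 <= (d - i)%:R :> R by rewrite ler1n subn_gt0.
have i_lt_d : i%:R + 1 <= d%:R :> R by rewrite natr1 ler_nat.
have num_gt0 : 0 < poch (2 * (d - i)%:R + r + s + 2) i.
  by apply: poch_gt0 => k _; have : 0 <= k%:R :> R by []; lra.
have den_gt0 : 0 < poch (2 * (d - i)%:R + r + s) i.+1.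
  by apply: poch_gt0 => k _; have : 0 <= k%:R :> R by []; lra.
rewrite pmulr_llt0 ?invr_gt0 // pmulr_llt0 // pmulr_rlt0; lra.
Qed.

Lemma cs_lt0 i : (0 < i)%N -> (i <= d)%N -> cs d r s i < 0.
Proof.
move: (hr) (hs) => r_gt s_gt i_gt0 le_id; rewrite /cs i_gt0.
have i_ge1 : 1 <= i%:R :> R by rewrite ler1n.
have i_le_d : i%:R <= d%:R :> R by rewrite ler_nat.
have num_gt0 : 0 < poch ((d - i)%:R + r + s + 1) (d - i).
  apply: poch_gt0 => k lt_k.
  have : 1 <= (d - i)%:R :> R by rewrite ler1n; case: (d - i)%N lt_k.
  by have : 0 <= k%:R :> R by []; lra.
have den_gt0 : 0 < poch ((d - i)%:R + r + s + 2) (d - i).+1.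
  apply: poch_gt0 => k _; have : 0 <= k%:R :> R by [].
  by have : 0 <= (d - i)%:R :> R by []; lra.
rewrite pmulr_llt0 ?invr_gt0 // pmulr_llt0 // pmulr_rlt0; lra.
Qed.

Lemma ks_neq0 k : (k <= d)%N -> ks d r s k != 0.
Proof.
move=> le_kd; rewrite mulf_neq0 ?invr_neq0 //; apply/prodf_neq0 => i _.
  by rewrite ltr0_neq0 // bs_lt0 // (leq_trans (ltn_ord i)).
by rewrite ltr0_neq0 // cs_lt0 // (leq_trans (ltn_ord i)).
Qed.

Lemma ks_balance k : (k < d)%N ->
  ks d r s k * bs d r s k = ks d r s k.+1 * cs d r s k.+1.
Proof.
move=> lt_kd; have ksS : ks d r s k.+1 = ks d r s k * bs d r s k / cs d r s k.+1.
  by rewrite /ks !big_ord_recr /= invfM; ring.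
by rewrite ksS divfK // ltr0_neq0 // cs_lt0.
Qed.

Lemma nu_neq0 : nu d r s != 0.
Proof.
move: (hr) (hs) => r_gt s_gt.
rewrite mulf_neq0 ?invr_neq0 // prodf_seq_neq0; apply/allP => j;
  rewrite mem_index_iota => /andP[j_ge1 le_jd]; apply/implyP => _.
  have dmj_lt : (d - j)%:R + 1 <= d%:R :> R.
    by rewrite natr1 ler_nat ltn_subrL j_ge1 (leq_trans j_ge1 le_jd).
  have : 0 <= (d - j)%:R :> R by [].
  rewrite /theta subn0; set a := d%:R; set b := (d - j)%:R => b_ge0.
  have -> : a * (a + r + s + 1) - b * (b + r + s + 1) = (a - b) * (a + b + r + s + 1).
    by ring.
  by rewrite mulf_neq0 // gt_eqF //; lra.
have j_ge1R : 1 <= j%:R :> R by rewrite ler1n.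
by rewrite /cc mulf_neq0 // gt_eqF //; lra.
Qed.

Definition ks_eval (f : {poly R}) : R :=
  \sum_(k < d.+1) ks d r s k * f.[theta d r s k].

Lemma ks_evalD : {morph ks_eval : f g / f + g}.
Proof.
by move=> f g; rewrite -big_split; apply: eq_bigr => k _; rewrite hornerD mulrDr.
Qed.

Lemma ks_eval0 : ks_eval 0 = 0.
Proof. by rewrite /ks_eval big1 // => k _; rewrite horner0 mulr0. Qed.

Lemma ks_evalZ a f : ks_eval (a *: f) = a * ks_eval f.
Proof. by rewrite mulr_sumr; apply: eq_bigr => k _; rewrite hornerZ mulrCA. Qed.

Lemma ks_eval_Lstar_val (f : {poly R}) :
  \sum_(k < d.+1) ks d r s k * Lstar_val d r s f k = 0.
Proof.
rewrite -[RHS](@sum_birth_death_eq0 R d (ks d r s) (bs d r s) (cs d r s)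
  (fun k => f.[theta d r s k]) ks_balance).
- by apply: eq_bigr => k _; rewrite /Lstar_val /as_ /thetas; congr (_ * _); ring.
- by rewrite /bs ltnn.
- by [].
Qed.

Lemma ks_eval_dual_basis (p : {poly R}) (i : 'I_d.+1) :
  (forall j, (j <= d)%N ->
     p.[theta d r s j] = if j == i then nu d r s / ks d r s i else 0) ->
  ks_eval p = nu d r s.
Proof.
move=> p_theta; have le_ord (k : 'I_d.+1) : (k <= d)%N by rewrite -ltnS.
rewrite /ks_eval (bigD1 i) //= big1 => [|k k_neq_i]; last first.
  by rewrite p_theta // (negbTE (k_neq_i : nat_of_ord k != i)) mulr0.
by rewrite p_theta // eqxx addr0 mulrC divfK // ks_neq0.
Qed.

Section ShiftedOperator.
Variables (Lstar : {poly R} -> {poly R}) (lam : R).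
Hypothesis Lstar_size :
  forall f : {poly R}, (size f <= d.+1)%N -> (size (Lstar f) <= d.+1)%N.
Hypothesis Lstar_theta : forall f : {poly R}, (size f <= d.+1)%N ->
  forall i, (i <= d)%N -> (Lstar f).[theta d r s i] = Lstar_val d r s f i.

Lemma ks_eval_Lstar (f : {poly R}) : (size f <= d.+1)%N -> ks_eval (Lstar f) = 0.
Proof.
move=> f_size; rewrite -(ks_eval_Lstar_val f); apply: eq_bigr => k _.
by rewrite Lstar_theta // -ltnS.
Qed.

Lemma size_Lstar_shift (f : {poly R}) :
  (size f <= d.+1)%N -> (size (Lstar f + lam *: f)%R <= d.+1)%N.
Proof.
move=> f_size; rewrite (leq_trans (size_polyD _ _)) // geq_max Lstar_size //.
exact: leq_trans (size_scale_leq _ _) f_size.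
Qed.

Lemma ks_eval_Lstar_shift (f : {poly R}) : (size f <= d.+1)%N ->
  ks_eval (Lstar f + lam *: f) = lam * ks_eval f.
Proof. by move=> f_size; rewrite ks_evalD ks_evalZ ks_eval_Lstar // add0r. Qed.

End ShiftedOperator.
End DualHahnWeights.

Theorem lemma2p4 (R : realType) (d : nat) (r s lam : R)
  (hr : -1 < r) (hs : -1 < s)
  (Lstar : {poly R} -> {poly R})
  (HL : forall f : {poly R}, (size f <= d.+1)%N ->
        (size (Lstar f) <= d.+1)%N /\
        (forall i, (i <= d)%N -> (Lstar f).[theta d r s i] = Lstar_val d r s f i))
  (u : nat -> {poly R})
  (Hu : forall i, (i <= d)%N ->
        (size (u i) <= d.+1)%N /\
        (forall j, (j <= d)%N ->
           (u i).[theta d r s j] = if j == i then nu d r s / ks d r s i else 0))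
  (M : 'M[R]_d.+1)
  (HM : forall j : 'I_d.+1,
        let g := Lstar (u j) + lam *: u j in
        Lstar g + lam *: g = \sum_(i < d.+1) M i j *: u i) :
  forall j : 'I_d.+1, \sum_(i < d.+1) M i j = lam ^+ 2.
Proof.
move=> j; have le_ord (k : 'I_d.+1) : (k <= d)%N by rewrite -ltnS.
have Lsize f hf := (HL f hf).1; have Ltheta f hf := (HL f hf).2.
have u_nu (i : 'I_d.+1) : ks_eval d r s (u i) = nu d r s.
  exact: (ks_eval_dual_basis hr hs (Hu i (le_ord i)).2).
have uj_size : (size (u j) <= d.+1)%N := (Hu j (le_ord j)).1.
have := congr1 (ks_eval d r s) (HM j).
rewrite /= !ks_eval_Lstar_shift ?size_Lstar_shift // u_nu.
rewrite (big_morph _ (ks_evalD d r s) (ks_eval0 d r s)).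
under eq_bigr do rewrite ks_evalZ u_nu.
rewrite -mulr_suml => nu_sum.
by apply: (mulIf (nu_neq0 d hr hs)); rewrite -nu_sum expr2 mulrA.
Qed.
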